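(* Let $G$ be a prime graph and $v\in V(G)$. (1) $v$ is simplicial if and only if, in every induced subgraph of $G$ isomorphic to $P_4$ that contains $v$, the vertex $v$ has degree one (in that $P_4$). (2) $v$ is antisimplicial if and only if, in every induced subgraph of $G$ isomorphic to $P_4$ that contains $v$, the vertex $v$ has degree two (in that $P_4$).
   Context: All graphs are finite and simple. $P_4$ is the path on four vertices. A vertex $b\notin X$ is mixed on $X$ if it has both a neighbor and a non-neighbor in $X$. A homogeneous set is a set $X\subseteq V(G)$ with $1<|X|<|V(G)|$ such that no vertex outside $X$ is mixed on $X$. $G$ is prime if $|V(G)|\ge4$ and has no homogeneous set. A vertex $v$ is simplicial if $N(v)$ is a clique, antisimplicial if $V(G)\setminus N(v)$ is a stable set. *)

From mathcomp Require Import all_boot.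
Set Implicit Arguments. Unset Strict Implicit. Unset Printing Implicit Defensive.

Definition simple_graph (T : finType) (e : rel T) : Prop :=
  symmetric e /\ irreflexive e.

Definition mixed (T : finType) (e : rel T) (b : T) (X : {set T}) : bool :=
  [exists x in X, e b x] && [exists y in X, ~~ e b y].

Definition homogeneous (T : finType) (e : rel T) (X : {set T}) : bool :=
  (1 < #|X|) && (#|X| < #|T|) && [forall b in ~: X, ~~ mixed e b X].

Definition prime_graph (T : finType) (e : rel T) : Prop :=
  4 <= #|T| /\ forall X : {set T}, ~~ homogeneous e X.

Definition simplicial (T : finType) (e : rel T) (v : T) : Prop :=
  forall x y, e v x -> e v y -> x != y -> e x y.

Definition antisimplicial (T : finType) (e : rel T) (v : T) : Prop :=
  forall x y, ~~ e v x -> ~~ e v y -> ~~ e x y.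

Definition induces_P4 (T : finType) (e : rel T) (S : {set T}) : Prop :=
  exists a b c d : T,
    [/\ uniq [:: a; b; c; d], S = [set a; b; c; d],
        [&& e a b, e b c & e c d] & [&& ~~ e a c, ~~ e a d & ~~ e b d]].

Definition deg_in (T : finType) (e : rel T) (S : {set T}) (v : T) : nat :=
  #|[set x in S | e v x]|.

From mathcomp Require Import all_boot.
Set Implicit Arguments. Unset Strict Implicit. Unset Printing Implicit Defensive.

(* Every induced P4 through v can be written a-b-c-d with v = a (an end,
   degree 1) or v = b (an inner vertex, degree 2), so the two conditions of
   the theorem say that v is never an inner vertex, resp. never an end, of
   an induced P4.  The forward implications are immediate: an inner v has
   two non-adjacent neighbours, an end v has two adjacent non-neighbours.

   The converses use primality.  If v has two non-adjacent neighbours x, y,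
   the component C of x in the complement of G[N(v)] contains y; a vertex
   mixed on C is mixed on a non-edge p q inside N(v), and with v it would
   give an induced P4 q-v-p-z with v inner.  So C is a homogeneous set,
   which is impossible.  Dually, two adjacent non-neighbours x, y of v give a
   component of G[V \ N[v]] that is homogeneous unless v is the end of an
   induced P4 v-z-p-q. *)

Section Graph.
Variables (T : finType) (e : rel T).
Hypotheses (e_sym : symmetric e) (e_irr : irreflexive e).

Definition is_P4 (a b c d : T) : bool :=
  [&& e a b, e b c & e c d] && [&& ~~ e a c, ~~ e a d & ~~ e b d].

Lemma neq_by_adj u u' w : e u w -> ~~ e u' w -> u != u'.
Proof. by move=> euw; apply: contraNneq => <-. Qed.

Lemma is_P4_uniq a b c d : is_P4 a b c d -> uniq [:: a; b; c; d].
Proof.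
case/andP => /and3P [ab bc cd] /and3P [nac nad nbd].
have adj_neq u w : e u w -> u != w by move=> euw; rewrite (neq_by_adj euw) ?e_irr.
rewrite /= !inE !negb_or (adj_neq a b) // (adj_neq b c) // (adj_neq c d) //=.
rewrite eq_sym (neq_by_adj cd) // eq_sym (neq_by_adj (_ : e d c)) ?(e_sym d) //.
by rewrite (neq_by_adj (_ : e b a)) ?(e_sym b) // e_sym.
Qed.

Lemma is_P4_rev a b c d : is_P4 a b c d -> is_P4 d c b a.
Proof.
case/andP => /and3P [ab bc cd] /and3P [nac nad nbd].
rewrite /is_P4 (e_sym d c) (e_sym c b) (e_sym b a).
by rewrite (e_sym d b) (e_sym d a) (e_sym c a) ab bc cd nac nad nbd.
Qed.

Lemma is_P4_induces a b c d : is_P4 a b c d -> induces_P4 e [set a; b; c; d].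
Proof.
move=> P; exists a, b, c, d.
by case/andP: (P) => paths non_edges; split; rewrite ?is_P4_uniq.
Qed.

Lemma induces_P4_at S v : induces_P4 e S -> v \in S ->
  exists a b c d, [/\ is_P4 a b c d, S = [set a; b; c; d] & v = a \/ v = b].
Proof.
case=> [a [b [c [d [_ -> E N]]]]]; have P : is_P4 a b c d by apply/andP.
have rev_set : [set a; b; c; d] = [set d; c; b; a].
  by apply/setP => w; rewrite !inE; case: (w == a) (w == b) (w == c) (w == d) => [] [] [] [].
rewrite !inE -!orbA => /or4P [] /eqP ->.
- by exists a, b, c, d; split; [| |left].
- by exists a, b, c, d; split; [| |right].
- by exists d, c, b, a; split; [exact: is_P4_rev| |right].
- by exists d, c, b, a; split; [exact: is_P4_rev| |left].
Qed.

Lemma deg_in_set4 a b c d u : uniq [:: a; b; c; d] ->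
  deg_in e [set a; b; c; d] u = e u a + e u b + e u c + e u d.
Proof.
move=> U; rewrite /deg_in.
have -> : #|[set x in [set a; b; c; d] | e u x]| = #|[seq x <- [:: a; b; c; d] | e u x]|.
  by apply: eq_card => x; rewrite !inE mem_filter !inE andbC -!orbA.
by move/card_uniqP: (filter_uniq (e u) U) => ->; rewrite size_filter /= !addnA addn0.
Qed.

Lemma is_P4_deg a b c d : is_P4 a b c d ->
  deg_in e [set a; b; c; d] a = 1 /\ deg_in e [set a; b; c; d] b = 2.
Proof.
move=> P; have U := is_P4_uniq P.
case/andP: P => /and3P [ab bc cd] /and3P [nac nad nbd].
rewrite !deg_in_set4 // !e_irr (e_sym b a) ab bc.
by rewrite (negbTE nac) (negbTE nad) (negbTE nbd).
Qed.

Lemma deg1_iff_never_inner v :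
  (forall S, induces_P4 e S -> v \in S -> deg_in e S v = 1) <->
  (forall a c d, ~~ is_P4 a v c d).
Proof.
split=> [deg1 a c d | never_inner S P4S vS].
- apply/negP => P; have [_ degv] := is_P4_deg P.
  by move: (deg1 _ (is_P4_induces P)); rewrite degv !inE eqxx orbT => /(_ isT).
- have [a [b [c [d [P -> [] vE]]]]] := induces_P4_at P4S vS; subst v.
  + by case: (is_P4_deg P).
  + by move: (never_inner a c d); rewrite P.
Qed.

Lemma deg2_iff_never_end v :
  (forall S, induces_P4 e S -> v \in S -> deg_in e S v = 2) <->
  (forall b c d, ~~ is_P4 v b c d).
Proof.
split=> [deg2 b c d | never_end S P4S vS].
- apply/negP => P; have [degv _] := is_P4_deg P.
  by move: (deg2 _ (is_P4_induces P)); rewrite degv !inE eqxx => /(_ isT).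
- have [a [b [c [d [P -> [] vE]]]]] := induces_P4_at P4S vS; subst v.
  + by move: (never_end b c d); rewrite P.
  + by case: (is_P4_deg P).
Qed.

Lemma simplicial_never_inner v : simplicial e v -> forall a c d, ~~ is_P4 a v c d.
Proof.
move=> simpl_v a c d; apply/negP => P; have := is_P4_uniq P.
case/andP: P => /and3P [av vc _] /and3P [nac _ _].
rewrite /= !inE !negb_or => /and4P [/and3P [_ ac _] _ _ _].
by move: nac; rewrite simpl_v // e_sym.
Qed.

Lemma antisimplicial_never_end v : antisimplicial e v -> forall b c d, ~~ is_P4 v b c d.
Proof.
move=> anti_v b c d; apply/negP => /andP [/and3P [_ _ cd] /and3P [nvc nvd _]].
by move: cd; rewrite (negbTE (anti_v c d nvc nvd)).
Qed.

Section Component.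
Variables (r : rel T) (A : {set T}) (x : T).
Hypothesis r_sym : symmetric r.

Definition inner_rel : rel T := [rel p q | [&& p \in A, q \in A & r p q]].
Definition component : {set T} := [set w | connect inner_rel x w].

Lemma component_sub w : x \in A -> w \in component -> w \in A.
Proof.
move=> xA; rewrite inE => /(closed_connect _) <- //.
by move=> p q /and3P [-> -> _].
Qed.

Lemma component_closed p q : x \in A ->
  p \in component -> q \in A -> r p q -> q \in component.
Proof.
move=> xA pC qA rpq; move: (pC); rewrite !inE => /connect_trans; apply.
by apply/connect1/and3P; split=> //; apply: component_sub pC.
Qed.

Lemma unmixed_component b : x \in A ->
  (forall p q, p \in component -> q \in component -> r p q -> e b p -> e b q) ->
  ~~ mixed e b component.
Proof.
move=> xA edge_unmixed; apply/negP.
case/andP => /existsP [p /andP [pC ebp]] /existsP [q /andP [qC nebq]].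
have /connectP [s Ps qE] : connect inner_rel p q.
  move: pC qC; rewrite !inE => xp; apply: connect_trans.
  rewrite (sym_connect_sym _) // => u w.
  by rewrite /inner_rel /= r_sym andbCA.
move: nebq; rewrite {q qC}qE; apply/negP/negPn.
elim: s p pC ebp Ps => [|u s IH] p pC ebp //= /andP [/and3P [_ uA rpu] Ps].
have uC := component_closed xA pC uA rpu.
exact: IH uC (edge_unmixed p u pC uC rpu ebp) Ps.
Qed.

Lemma component_homogeneous y w0 (c : bool) :
  x \in A -> y \in A -> x != y -> r x y -> w0 \notin A ->
  (forall z p q, z \notin A -> p \in A -> q \in A -> r p q -> e z p -> e z q) ->
  (forall z p, z \in A -> p \in A -> z != p -> ~~ r z p -> e z p = c) ->
  homogeneous e component.
Proof.
move=> xA yA xy rxy w0A outside inside.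
have xC : x \in component by rewrite inE connect0.
have yC : y \in component by rewrite inE connect1 //; apply/and3P.
apply/andP; split; first (apply/andP; split).
- by apply/card_gt1P; exists x, y.
- rewrite -cardsT; apply: proper_card; rewrite properT.
  by apply: contraNneq w0A => compT; apply: (component_sub xA); rewrite compT inE.
- apply/forallP => b; apply/implyP; rewrite inE => bC.
  apply: unmixed_component => // p q pC qC rpq ebp.
  have [bA|bA] := boolP (b \in A); last first.
    by apply: outside bA _ _ rpq ebp; apply: component_sub.
  have not_r u : u \in component -> ~~ r b u.
    by move=> uC; apply: contra bC; rewrite r_sym; apply: component_closed.
  have neq u : u \in component -> b != u by move=> uC; apply: contraNneq bC => ->.
  have adj_c u : u \in component -> e b u = c.
    by move=> uC; apply: inside; rewrite ?neq ?not_r //; apply: component_sub uC.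
  by rewrite adj_c // -(adj_c p).
Qed.

End Component.

(* In a prime graph, a vertex that is never inner is simplicial: otherwise
   the co-component in N(v) of two non-adjacent neighbours is homogeneous. *)
Lemma never_inner_simplicial v : prime_graph e ->
  (forall a c d, ~~ is_P4 a v c d) -> simplicial e v.
Proof.
move=> [_ prime] never_inner x y vx vy xy; apply/negPn/negP => nxy.
pose nonadj := [rel p q | (p != q) && ~~ e p q].
apply: (negP (prime (component nonadj [set w | e v w] x))).
apply: (@component_homogeneous nonadj _ x _ y v true) => //.
- by move=> p q /=; rewrite eq_sym e_sym.
- by rewrite inE.
- by rewrite inE.
- by rewrite /= xy.
- by rewrite inE e_irr.
- move=> z p q; rewrite !inE => nvz vp vq /andP [_ npq] ezp.
  apply/negPn/negP => nzq; move: (never_inner q p z).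
  by rewrite /is_P4 e_sym vq vp e_sym ezp (e_sym q) npq (e_sym q) nzq nvz.
- by move=> z p _ _ zp; rewrite /= zp negbK.
Qed.

(* Dually, a vertex that is never an end is antisimplicial: otherwise the
   component in V \ N[v] of two adjacent non-neighbours is homogeneous. *)
Lemma never_end_antisimplicial v : prime_graph e ->
  (forall b c d, ~~ is_P4 v b c d) -> antisimplicial e v.
Proof.
move=> [_ prime] never_end x y nvx nvy; apply/negP => exy.
have xv : x != v by apply: contraNneq nvy => <-.
have yv : y != v by apply: contraNneq nvx => <-; rewrite e_sym.
pose far := [set w | (w != v) && ~~ e v w].
apply: (negP (prime (component e far x))).
apply: (@component_homogeneous e far x e_sym y v false) => //.
- by rewrite inE xv.
- by rewrite inE yv.
- by apply: contraTneq exy => ->; rewrite e_irr.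
- by rewrite inE eqxx.
- move=> z p q; rewrite !inE negb_and !negbK => /orP [/eqP -> | vz].
    by case/andP => _ /negP.
  move=> /andP [_ nvp] /andP [_ nvq] epq ezp.
  apply/negPn/negP => nzq; move: (never_end z p q).
  by rewrite /is_P4 vz ezp epq nvp nvq nzq.
- by move=> z p _ _ _ /negbTE.
Qed.

End Graph.

Theorem lemma3p3 (T : finType) (e : rel T) (v : T) :
  simple_graph e -> prime_graph e ->
  (simplicial e v <->
     (forall S : {set T}, induces_P4 e S -> v \in S -> deg_in e S v = 1))
  /\
  (antisimplicial e v <->
     (forall S : {set T}, induces_P4 e S -> v \in S -> deg_in e S v = 2)).
Proof.
move=> [e_sym e_irr] prime; split.
- apply: (iff_trans _ (iff_sym (deg1_iff_never_inner e_sym e_irr v))).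
  by split; [exact: simplicial_never_inner | exact: never_inner_simplicial].
- apply: (iff_trans _ (iff_sym (deg2_iff_never_end e_sym e_irr v))).
  by split; [exact: antisimplicial_never_end | exact: never_end_antisimplicial].
Qed.
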